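(* Let $\Sigma$ be a finite totally ordered alphabet, let $W = a_1 a_2 \cdots a_n \in \Sigma^+$, and let $W = L_1 L_2 \cdots L_k$ be its Lyndon factorization. Let $1 \le r \le s \le k$ and let $u = L_r L_{r+1} \cdots L_s$, occupying positions $first(u), \dots, last(u)$ of $W$. Then the sorting of the suffixes of $u$ is compatible with the sorting of the suffixes of $W$; that is, for all indices $i, j$ with $first(u) \le i < j \le last(u)$, $$W[i, last(u)] < W[j, last(u)] \iff W[i,n] < W[j,n],$$ where $<$ denotes the (strict) lexicographic order on $\Sigma^*$.
   Context: For a word $W = a_1\cdots a_n$, $W[i,j] = a_i\cdots a_j$. The lexicographic order on $\Sigma^*$ is the usual one induced by the order of $\Sigma$, in which a proper prefix is smaller than the longer word. Two words $x,y$ are conjugate if $x = pq$, $y = qp$ for some words $p,q$. A Lyndon word is a nonempty primitive word that is strictly smaller (lexicographically) than all its other conjugates. The Lyndon factorization of $W \in \Sigma^+$ is the unique factorization $W = L_1 L_2\cdots L_k$ into Lyndon words with $L_1 \ge L_2 \ge \cdots \ge L_k$ lexicographically. For a factor $u$ of $W$ occurring at a fixed set of positions, $first(u)$ and $last(u)$ denote the positions in $W$ of its first and last letter; $W[i, last(u)]$ is the local suffix of $u$ at position $i$ and $W[i,n]$ is the global suffix of $W$ at position $i$. *)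

From mathcomp Require Import all_boot all_order.
Set Implicit Arguments. Unset Strict Implicit. Unset Printing Implicit Defensive.
Import Order.TTheory.
Local Open Scope order_scope.

Section Words.
Context {d : Order.disp_t} {T : finOrderType d}.

Fixpoint lex_lt (x y : seq T) : bool :=
  match x, y with
  | [::], [::] => false
  | [::], _ :: _ => true
  | _ :: _, [::] => false
  | a :: x', b :: y' => (a < b) || ((a == b) && lex_lt x' y')
  end.

Definition lex_le (x y : seq T) : bool := (x == y) || lex_lt x y.

Definition conjugate (x y : seq T) : Prop :=
  exists p q : seq T, x = p ++ q /\ y = q ++ p.

Definition primitive (w : seq T) : Prop :=
  forall (v : seq T) (m : nat), w = flatten (nseq m v) -> m = 1%N.

Definition lyndon (w : seq T) : Prop :=
  w <> [::] /\ primitive w /\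
  forall v, conjugate w v -> v <> w -> lex_lt w v.

Definition lyndon_factorization (W : seq T) (Ls : seq (seq T)) : Prop :=
  flatten Ls = W /\ (forall L, L \in Ls -> lyndon L) /\
  (forall i, (i.+1 < size Ls)%N -> lex_le (nth [::] Ls i.+1) (nth [::] Ls i)).

(* W[i, j] with 1-based positions: a_i ... a_j *)
Definition subword (W : seq T) (i j : nat) : seq T := drop i.-1 (take j W).

End Words.

From mathcomp Require Import all_boot all_order zify.
Set Implicit Arguments. Unset Strict Implicit. Unset Printing Implicit Defensive.
Import Order.TTheory.
Local Open Scope order_scope.

(* Write W = F z with F = L_1 ... L_s and z = L_(s+1) ... L_k.  A Lyndon word is
   not larger than any of its suffixes and the factors are non-increasing, so
   every nonempty suffix of F is at least L_(s+1); feeding this through the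
   factorization of z shows w z >= z for every suffix w of F.  Now compare two
   suffixes x, y of F with |y| < |x|: if they differ at some position, that
   position decides both x vs y and x z vs y z; otherwise x = y w, so y < x, and
   x z = y w z >= y z rules out x z < y z. *)

Section LexicographicOrder.
Context {d : Order.disp_t} {T : finOrderType d}.
Implicit Types x y z t w a b p q : seq T.

Lemma lex_ltE x y : lex_lt x y = (x < y :> seqlexi T).
Proof. by elim: x y => [|a x IH] [|b y] //=; rewrite ltxi_cons IH; case: ltgtP. Qed.

Lemma lex_leE x y : lex_le x y = (x <= y :> seqlexi T).
Proof. by rewrite /lex_le le_eqVlt lex_ltE. Qed.

Lemma lex_leNgt x y : lex_le x y = ~~ lex_lt y x.
Proof. by rewrite lex_leE lex_ltE leNgt. Qed.

Lemma lex_lt_total x y : x != y -> lex_lt x y || lex_lt y x.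
Proof. by rewrite !lex_ltE; exact: (@lt_total _ (seqlexi T)). Qed.

Lemma lex_le_trans x y z : lex_le x y -> lex_le y z -> lex_le x z.
Proof. by rewrite !lex_leE; exact: le_trans. Qed.

Lemma lex_le0s x : lex_le [::] x.
Proof. by rewrite lex_leE lexi0s. Qed.

Lemma lex_lt_catl t a b : lex_lt (t ++ a) (t ++ b) = lex_lt a b.
Proof. by elim: t => //= c t ->; rewrite ltxx eqxx. Qed.

Lemma lex_le_catl t a b : lex_le (t ++ a) (t ++ b) = lex_le a b.
Proof. by rewrite /lex_le lex_lt_catl eqseq_cat // eqxx. Qed.

Lemma lex_le_prefix a w : lex_le a (a ++ w).
Proof. by rewrite -{1}[a]cats0 lex_le_catl lex_le0s. Qed.

Lemma lex_le_cases x y : lex_le x y ->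
  (exists w, y = x ++ w) \/ (forall a b, lex_lt (x ++ a) (y ++ b)).
Proof.
rewrite /lex_le; case/orP => [/eqP <-|]; first by left; exists [::]; rewrite cats0.
elim: x y => [|a x IH] [|b y] //=; first by left; exists (b :: y).
case: ltgtP => //= [_ _|<- /IH [[w ->]|mismatch]]; first by right.
  by left; exists w.
by right.
Qed.

Lemma lex_lt_cat_samesize p q a b : size p = size q -> lex_lt p q ->
  lex_lt (p ++ a) (q ++ b).
Proof.
move=> eq_size lt_pq; have : lex_le p q by rewrite /lex_le lt_pq orbT.
case/lex_le_cases => [[w eq_q]|->//].
have w0 : w = [::] by apply/size0nil; move/(congr1 size): eq_q; rewrite size_cat; lia.
by move: lt_pq; rewrite eq_q w0 cats0 lex_ltE ltxx.
Qed.

Lemma lex_lt_catr x y z : (size y < size x)%N ->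
  (forall w, x = y ++ w -> lex_le z (w ++ z)) ->
  lex_lt x y = lex_lt (x ++ z) (y ++ z).
Proof.
elim: y x => [|b y IH] [|a x] // lt_size border.
  by rewrite cat0s; have := border _ erefl; rewrite lex_leNgt => /negbTE ->.
rewrite /=; case: (eqVneq a b) => [eq_ab|//]; rewrite (IH x) // => w eq_x.
by apply: border; rewrite eq_x eq_ab.
Qed.

Lemma lex_lt_drop_catr F z i j : (i < j <= size F)%N ->
  (forall m, lex_le z (drop m F ++ z)) ->
  lex_lt (drop i F) (drop j F) = lex_lt (drop i F ++ z) (drop j F ++ z).
Proof.
move=> /andP[lt_ij le_jF] border; apply: lex_lt_catr => [|w eq_w].
  by rewrite !size_drop; lia.
have := congr1 (drop (size (drop j F))) eq_w.
by rewrite drop_size_cat // drop_drop => <-.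
Qed.

End LexicographicOrder.

Section LyndonWords.
Context {d : Order.disp_t} {T : finOrderType d}.
Implicit Types p t v L : seq T.

Lemma cat_commute_flatten_nseq p t : p ++ t = t ++ p ->
  exists v k l, p = flatten (nseq k v) /\ t = flatten (nseq l v).
Proof.
have [n] := ubnP (size p + size t); elim: n p t => [|n IH] p t; first by rewrite ltn0.
wlog le_pt : p t / (size p <= size t)%N.
  move=> wlog_le lt_n e; case: (leqP (size p) (size t)) => [le_pt|lt_tp]; first exact: wlog_le.
  have [|v [k [l [-> ->]]]] := wlog_le t p (ltnW lt_tp) _ (esym e); first by rewrite addnC.
  by exists v, l, k.
move=> lt_n e; case: (posnP (size p)) => [/size0nil ->|lt0p].
  by exists t, 0%N, 1%N; rewrite /= cats0.
have take_t : take (size p) t = p.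
  by have := congr1 (take (size p)) e; rewrite take_size_cat // takel_cat.
set t' := drop (size p) t.
have eq_t : t = p ++ t' by rewrite -{1}(cat_take_drop (size p) t) take_t.
have e' : p ++ t' = t' ++ p.
  by have := congr1 (drop (size p)) e; rewrite eq_t -catA !drop_size_cat.
have [|v [k [l [eq_p eq_t']]]] := IH p t' _ e'.
  by move: lt_n; rewrite eq_t size_cat; lia.
by exists v, k, (k + l)%N; rewrite eq_t nseqD flatten_cat -eq_p -eq_t'.
Qed.

Lemma primitive_cat_commute p t : primitive (p ++ t) -> p ++ t = t ++ p ->
  (p == [::]) || (t == [::]).
Proof.
move=> prim /cat_commute_flatten_nseq [v [k [l [eq_p eq_t]]]].
move: prim; rewrite {}eq_p {}eq_t -flatten_cat -nseqD => /(_ v _ erefl) kl.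
have [->|->] : k = 0%N \/ l = 0%N by lia.
  by [].
by rewrite orbT.
Qed.

Lemma lyndon_le_conjugate L v : lyndon L -> conjugate L v -> lex_le L v.
Proof.
move=> [_ [_ min_conj]] conj_v; rewrite /lex_le.
by case: (eqVneq L v) => [//|/eqP neq_Lv]; rewrite min_conj // => /esym.
Qed.

Lemma lyndon_le_drop L n : lyndon L -> (n < size L)%N -> lex_le L (drop n L).
Proof.
case: n => [|n] lyn_L lt_nL; first by rewrite drop0 /lex_le eqxx.
have not_below_conj v : conjugate L v -> lex_lt v L -> False.
  by move=> /(lyndon_le_conjugate lyn_L); rewrite lex_leNgt => /negP.
set p := take n.+1 L; set t := drop n.+1 L.
have eq_L : L = p ++ t by rewrite cat_take_drop.
have p0 : p != [::] by rewrite -size_eq0 size_takel // ltnW.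
have t0 : t != [::] by rewrite -size_eq0 size_drop subn_eq0 -ltnNge.
rewrite lex_leNgt; apply/negP => lt_tL.
have : lex_le t L by rewrite /lex_le lt_tL orbT.
case/lex_le_cases => [[q eq_L']|mismatch]; last first.
  by apply: (not_below_conj (t ++ p)); [exists p, t | rewrite -[L]cats0 mismatch].
have size_q : size q = size p by move: (congr1 size eq_L'); rewrite {1}eq_L !size_cat; lia.
case: (eqVneq p q) => [eq_pq|/lex_lt_total/orP[lt_pq|lt_qp]].
- have comm : p ++ t = t ++ p by rewrite -eq_L {1}eq_L' eq_pq.
  have prim : primitive (p ++ t) by rewrite -eq_L; case: lyn_L => _ [].
  by move: (primitive_cat_commute prim comm); rewrite (negbTE p0) (negbTE t0).
- by apply: (not_below_conj (t ++ p)); [exists p, t | rewrite [X in lex_lt _ X]eq_L' lex_lt_catl].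
- apply: (not_below_conj (q ++ t)); first by exists t, q.
  by rewrite [X in lex_lt _ X]eq_L; apply: lex_lt_cat_samesize.
Qed.

End LyndonWords.

Section NonIncreasingLyndonSequences.
Context {d : Order.disp_t} {T : finOrderType d}.
Implicit Types x Y H L : seq T.
Implicit Types Ms : seq (seq T).

Definition suffixes_ge H x := forall n, (n < size x)%N -> lex_le H (drop n x).

Lemma suffixes_ge_drop H x m : suffixes_ge H x -> suffixes_ge H (drop m x).
Proof. by move=> suf_x n; rewrite size_drop drop_drop => lt_n; apply: suf_x; lia. Qed.

Lemma suffixes_ge_flatten H Ms :
  (forall L, L \in Ms -> lyndon L /\ lex_le H L) -> suffixes_ge H (flatten Ms).
Proof.
elim: Ms => [|L Ms IH] hMs n //=; rewrite size_cat drop_cat.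
case: (ltnP n (size L)) => [lt_nL _|le_Ln lt_n].
  have [lyn_L le_HL] := hMs L (mem_head _ _).
  exact: lex_le_trans le_HL (lex_le_trans (lyndon_le_drop lyn_L lt_nL) (lex_le_prefix _ _)).
by apply: IH; [move=> L' L'_Ms; apply: hMs; rewrite in_cons L'_Ms orbT | lia].
Qed.

Lemma flatten_lyndon_le_cat Ms x Y :
  pairwise [rel a b | lex_le b a] Ms -> (forall L, L \in Ms -> lyndon L) ->
  suffixes_ge (head [::] Ms) x -> lex_le (flatten Ms) Y ->
  lex_le (flatten Ms) (x ++ Y).
Proof.
elim: Ms x Y => [|L Ms IH] x Y /=; first by move=> *; exact: lex_le0s.
move=> /andP[L_ge_Ms pw_Ms] lyn suf_x le_Y.
have lyn_Ms L' : L' \in Ms -> lyndon L' by move=> L'_Ms; apply: lyn; rewrite in_cons L'_Ms orbT.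
have head_le : lex_le (head [::] Ms) L.
  by move: L_ge_Ms; case: (Ms) => [|L' Ms'] /=; [rewrite lex_le0s | case/andP].
have suf_head y : suffixes_ge L y -> suffixes_ge (head [::] Ms) y.
  by move=> suf_y n /suf_y; exact: lex_le_trans head_le.
have le_Ms_Y : lex_le (flatten Ms) Y.
  apply: lex_le_trans le_Y; apply: IH => //; last by rewrite /lex_le eqxx.
  by apply: suf_head => n; exact: lyndon_le_drop (lyn L (mem_head _ _)).
case: (eqVneq x [::]) => [-> //|x0].
have := suf_x 0%N; rewrite drop0 lt0n size_eq0 x0 => /(_ isT).
case/lex_le_cases => [[p eq_x]|mismatch]; last by rewrite /lex_le mismatch orbT.
rewrite eq_x -catA lex_le_catl; apply: IH => //; apply: suf_head.
have -> : p = drop (size L) x by rewrite eq_x drop_size_cat.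
exact: suffixes_ge_drop.
Qed.

End NonIncreasingLyndonSequences.

Section LyndonFactorization.
Context {d : Order.disp_t} {T : finOrderType d}.
Implicit Types W : seq T.
Implicit Types Ls : seq (seq T).

Lemma lyndon_factorization_pairwise W Ls :
  lyndon_factorization W Ls -> pairwise [rel a b | lex_le b a] Ls.
Proof.
move=> [_ [_ sorted_Ls]]; rewrite -sorted_pairwise; last first.
  by move=> b a c le_ba le_cb; exact: lex_le_trans le_cb le_ba.
by apply/(sortedP [::]) => k; exact: sorted_Ls.
Qed.

Lemma lyndon_factorization_suffix_cat_ge W Ls s m : lyndon_factorization W Ls ->
  lex_le (flatten (drop s Ls)) (drop m (flatten (take s Ls)) ++ flatten (drop s Ls)).
Proof.
move=> fact; have [_ [lyn _]] := fact.
move: (lyndon_factorization_pairwise fact).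
rewrite -{1}(cat_take_drop s Ls) pairwise_cat => /and3P[cross _ pw_drop].
apply: flatten_lyndon_le_cat => //; last by rewrite /lex_le eqxx.
  by move=> L /mem_drop; exact: lyn.
apply/suffixes_ge_drop/suffixes_ge_flatten => L L_take.
split; first exact/lyn/(mem_take L_take).
case: (drop s Ls) cross => [|H Hs] /= cross; first exact: lex_le0s.
by apply: (allrelP cross) => //; rewrite mem_head.
Qed.

End LyndonFactorization.

Theorem theorem2 (d : Order.disp_t) (T : finOrderType d) (W : seq T)
    (Ls : seq (seq T)) (r s : nat) :
  W <> [::] ->
  lyndon_factorization W Ls ->
  (1 <= r)%N -> (r <= s)%N -> (s <= size Ls)%N ->
  let firstu := (size (flatten (take r.-1 Ls))).+1 in
  let lastu := size (flatten (take s Ls)) in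
  forall i j : nat, (firstu <= i)%N -> (i < j)%N -> (j <= lastu)%N ->
    (lex_lt (subword W i lastu) (subword W j lastu) <->
     lex_lt (subword W i (size W)) (subword W j (size W))).
Proof.
move=> _ fact _ _ _ firstu lastu i j le_fi lt_ij le_jl.
set F := flatten (take s Ls) in lastu le_jl *; set z := flatten (drop s Ls).
have eq_W : W = F ++ z by case: fact => <- _; rewrite -flatten_cat cat_take_drop.
have lt_iF : (i.-1 < size F)%N by move: le_fi le_jl; rewrite /lastu; lia.
have lt_jF : (j.-1 < size F)%N by move: le_jl; rewrite /lastu; lia.
rewrite /subword take_size /lastu eq_W take_size_cat // !drop_cat lt_iF lt_jF.
rewrite -lex_lt_drop_catr //; first by apply/andP; split; lia.
by move=> m; exact: lyndon_factorization_suffix_cat_ge fact.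
Qed.
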